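(* Let $(\mathcal{V},g)$ be a finite-dimensional real scalar product space, let $J_1,\dots,J_m$ be skew-adjoint endomorphisms of $\mathcal{V}$ with $J_iJ_j+J_jJ_i=-2\delta_{ij}\,\mathrm{id}$ for $1\le i,j\le m$, and let $\mu_0,\dots,\mu_m\in\mathbb{R}$. Then the (Clifford) algebraic curvature tensor $R=\mu_0R^0+\sum_{i=1}^m\mu_iR^{J_i}$ is totally Jacobi-dual.
   Context: A scalar product space is a finite-dimensional real vector space with a nondegenerate symmetric bilinear form $g$; $\varepsilon_X=g(X,X)$. $R^0(X,Y,Z,W)=g(Y,Z)g(X,W)-g(X,Z)g(Y,W)$; for skew-adjoint $J$, $R^J(X,Y,Z,W)=g(JX,Z)g(JY,W)-g(JY,Z)g(JX,W)+2g(JX,Y)g(JZ,W)$. The Jacobi operator is $\mathcal{J}_X(Y)=\sum_{i}\varepsilon_{E_i}R(Y,X,X,E_i)E_i$ for an orthonormal basis $(E_i)$. An eigenvector of $\mathcal{J}_X$ is a nonzero $Y$ with $\mathcal{J}_X(Y)=\lambda Y$, $\lambda\in\mathbb{R}$. $R$ is totally Jacobi-dual if for all $X,Y\in\mathcal{V}$ with $X\neq0$ (null or not): whenever $Y$ is an eigenvector of $\mathcal{J}_X$, then $X$ is an eigenvector of $\mathcal{J}_Y$. *)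

(* Real scalar product space modelled as column vectors 'cV[R]_n
   over R : realType, with scalar product g(x,y) = x^T G y, G symmetric invertible. *)
From HB Require Import structures.
From mathcomp Require Import all_boot all_order all_algebra.
From mathcomp Require Import reals.
Set Implicit Arguments. Unset Strict Implicit. Unset Printing Implicit Defensive.
Import Order.TTheory GRing.Theory Num.Theory.
Local Open Scope ring_scope.

Section Defs.
Variables (R : realType) (n : nat).
Notation V := 'cV[R]_n.

Definition gform (G : 'M[R]_n) (x y : V) : R := (x^T *m G *m y) 0 0.

Definition scalar_product (G : 'M[R]_n) : Prop := G^T = G /\ G \in unitmx.

Definition skew_adjoint (G : 'M[R]_n) (J : 'M[R]_n) : Prop :=
  forall x y : V, gform G (J *m x) y = - gform G x (J *m y).

Definition R0 (G : 'M[R]_n) (X Y Z W : V) : R :=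
  gform G Y Z * gform G X W - gform G X Z * gform G Y W.

Definition RJ (G J : 'M[R]_n) (X Y Z W : V) : R :=
  gform G (J *m X) Z * gform G (J *m Y) W - gform G (J *m Y) Z * gform G (J *m X) W
  + 2 * gform G (J *m X) Y * gform G (J *m Z) W.

Definition clifford_tensor (m : nat) (G : 'M[R]_n) (J : 'I_m -> 'M[R]_n)
  (mu0 : R) (mu : 'I_m -> R) (X Y Z W : V) : R :=
  mu0 * R0 G X Y Z W + \sum_(i < m) mu i * RJ G (J i) X Y Z W.

Definition orthonormal_basis (G : 'M[R]_n) (E : 'I_n -> V) : Prop :=
  (forall i j, i != j -> gform G (E i) (E j) = 0) /\
  (forall i, gform G (E i) (E i) = 1 \/ gform G (E i) (E i) = -1).

Definition jacobi_op (G : 'M[R]_n) (E : 'I_n -> V) (Rt : V -> V -> V -> V -> R)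
  (X Y : V) : V :=
  \sum_(i < n) (gform G (E i) (E i) * Rt Y X X (E i)) *: E i.

Definition eigenvector (A : V -> V) (Y : V) : Prop :=
  Y != 0 /\ exists lambda : R, A Y = lambda *: Y.

Definition totally_jacobi_dual (G : 'M[R]_n) (E : 'I_n -> V)
  (Rt : V -> V -> V -> V -> R) : Prop :=
  forall X Y : V, X != 0 ->
    eigenvector (jacobi_op G E Rt X) Y -> eigenvector (jacobi_op G E Rt Y) X.

End Defs.

From mathcomp Require Import all_boot all_order all_algebra.
From mathcomp Require Import reals.
From mathcomp Require Import ring lra.

(* For the Clifford tensor the Jacobi operator is
     J_X(Y) = mu0 (g(X,X) Y - g(Y,X) X) + 3 B X,   B = sum_i mu_i g(J_i Y, X) J_i,
   where B changes sign when X and Y are exchanged and, by the Clifford relations,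
   B^2 = -s id with s = sum_i (mu_i g(J_i Y, X))^2 >= 0.  If J_X(Y) = l Y, put
   c = mu0 g(X,X) - l and a = mu0 g(X,Y), so that c Y = a X - 3 B X.  Substituting
   this into c J_Y(X) = c (mu0 g(Y,Y) X - a Y - 3 B Y) gives
     c J_Y(X) = (c mu0 g(Y,Y) - a^2 - 9 s) X.
   If c <> 0 then X is an eigenvector of J_Y; if c = 0 then a^2 + 9 s = 0, so
   a = 0 and B = 0, and J_Y(X) = mu0 g(Y,Y) X. *)

Set Implicit Arguments.
Unset Strict Implicit.
Unset Printing Implicit Defensive.

Import Order.TTheory GRing.Theory Num.Theory.
Local Open Scope ring_scope.

Section ScalarProduct.
Variables (R : realType) (n : nat) (G : 'M[R]_n).
Local Notation g := (gform G).

Lemma gformDl x x' y : g (x + x') y = g x y + g x' y.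
Proof. by rewrite /gform linearD /= !mulmxDl mxE. Qed.

Lemma gformZl a x y : g (a *: x) y = a * g x y.
Proof. by rewrite /gform linearZ /= -!scalemxAl mxE. Qed.

Lemma gform_suml I (r : seq I) (P : pred I) (F : I -> 'cV[R]_n) y :
  g (\sum_(i <- r | P i) F i) y = \sum_(i <- r | P i) g (F i) y.
Proof. by rewrite /gform linear_sum /= !mulmx_suml summxE. Qed.

Lemma gformC x y : G^T = G -> g x y = g y x.
Proof.
move=> G_sym; rewrite /gform -[in LHS](trmxK (x^T *m G *m y)) [in LHS]mxE.
by rewrite !trmx_mul trmxK G_sym mulmxA.
Qed.

Lemma skew_adjoint_gform_diag J x : G^T = G -> skew_adjoint G J -> g (J *m x) x = 0.
Proof. by move=> G_sym J_skew; have := J_skew x x; rewrite [g x _]gformC // => h; lra. Qed.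

Lemma gform_mxE m p (M : 'M[R]_(n, m)) (N : 'M[R]_(n, p)) i j :
  (M^T *m G *m N) i j = g (col i M) (col j N).
Proof.
rewrite /gform !mxE; apply: eq_bigr => l _; rewrite !mxE; congr (_ * _).
by apply: eq_bigr => k _; rewrite !mxE.
Qed.

Definition basis_mx (E : 'I_n -> 'cV[R]_n) : 'M[R]_n := \matrix_(i, j) E j i 0.

Lemma col_basis_mx E j : col j (basis_mx E) = E j.
Proof. by apply/matrixP => i k; rewrite (ord1 k) !mxE. Qed.

Section Orthonormal.
Variable E : 'I_n -> 'cV[R]_n.
Hypothesis E_orthonormal : orthonormal_basis G E.

Let eps := \row_i g (E i) (E i).

Lemma gram_basis_mx : (basis_mx E)^T *m G *m basis_mx E = diag_mx eps.
Proof.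
case: E_orthonormal => E_orth _.
apply/matrixP => i j; rewrite gform_mxE !col_basis_mx !mxE.
by case: eqVneq => [->|/E_orth]; rewrite ?mulr1n ?mulr0n.
Qed.

Lemma orthonormal_signs_sqr : diag_mx eps *m diag_mx eps = 1%:M.
Proof.
case: E_orthonormal => _ E_norm.
rewrite mulmx_diag -diag_const_mx; congr diag_mx; apply/rowP => i; rewrite !mxE.
by case: (E_norm i) => ->; rewrite ?mulr1 ?mulrNN ?mulr1.
Qed.

Lemma orthonormal_expansion Z : \sum_i (g (E i) (E i) * g (E i) Z) *: E i = Z.
Proof.
set M := basis_mx E.
(* M^T G M = diag eps is an involution, so M diag eps inverts M^T G. *)
have inv : (M *m diag_mx eps) *m (M^T *m G) = 1%:M.
  by apply: mulmx1C; rewrite mulmxA gram_basis_mx orthonormal_signs_sqr.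
have coords : M^T *m G *m Z = \col_i g (E i) Z.
  by apply/matrixP => i j; rewrite gform_mxE col_basis_mx col_id mxE.
rewrite -[RHS]mul1mx -inv -mulmxA coords; apply/matrixP => k j; rewrite (ord1 j).
rewrite summxE !mxE; apply: eq_bigr => i _.
by rewrite mul_mx_diag !mxE mulrC mulrA.
Qed.

End Orthonormal.

Section CliffordSystem.
Variables (m : nat) (J : 'I_m -> 'M[R]_n).
Hypothesis J_clifford : forall i j : 'I_m,
  J i *m J j + J j *m J i = (if i == j then - (2%:M) else 0).

Definition clifford_mx (b : 'I_m -> R) : 'M[R]_n := \sum_i b i *: J i.

Lemma clifford_mx_sqr b : clifford_mx b *m clifford_mx b = (- \sum_i b i ^+ 2)%:M.
Proof.
set S := \sum_i \sum_j (b i * b j) *: (J i *m J j).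
have expand : clifford_mx b *m clifford_mx b = S.
  rewrite /clifford_mx mulmx_suml; apply: eq_bigr => i _; rewrite mulmx_sumr.
  by apply: eq_bigr => j _; rewrite -scalemxAl -scalemxAr scalerA.
have anticomm : S + S = \sum_i \sum_j (b i * b j) *: (J i *m J j + J j *m J i).
  rewrite {2}/S exchange_big -big_split; apply: eq_bigr => i _ /=.
  by rewrite -big_split; apply: eq_bigr => j _ /=; rewrite [b j * _]mulrC scalerDr.
have diag i : \sum_j (b i * b j) *: (J i *m J j + J j *m J i) = (b i ^+ 2) *: - (2%:M).
  rewrite (bigD1 i) //= big1 ?addr0 => [|j /negPf ji]; first by rewrite J_clifford eqxx.
  by rewrite J_clifford eq_sym ji scaler0.
apply: (@scalerI _ _ 2); first by rewrite pnatr_eq0.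
rewrite expand scaler_nat mulr2n anticomm (eq_bigr _ (fun i _ => diag i)) -scaler_suml.
by rewrite scalerN !scale_scalar_mx -raddfN /= mulrN mulrC.
Qed.

Variables (mu0 : R) (mu : 'I_m -> R).
Hypothesis G_sym : G^T = G.
Hypothesis J_skew : forall i, skew_adjoint G (J i).

Definition jacobi_coef (X Y : 'cV[R]_n) (i : 'I_m) : R := mu i * g (J i *m Y) X.

Definition clifford_jacobi (X Y : 'cV[R]_n) : 'cV[R]_n :=
  (mu0 * g X X) *: Y - (mu0 * g Y X) *: X + 3 *: (clifford_mx (jacobi_coef X Y) *m X).

Lemma clifford_tensor_gform X Y W :
  clifford_tensor G J mu0 mu Y X X W = g (clifford_jacobi X Y) W.
Proof.
rewrite /clifford_tensor /clifford_jacobi /clifford_mx !gformDl gformZl.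
rewrite -scaleN1r !gformZl mulmx_suml gform_suml mulr_sumr.
congr (_ + _); first by rewrite /R0; ring.
apply: eq_bigr => i _; rewrite -scalemxAl gformZl /RJ /jacobi_coef.
by rewrite skew_adjoint_gform_diag //; ring.
Qed.

Lemma jacobi_op_clifford E X Y : orthonormal_basis G E ->
  jacobi_op G E (clifford_tensor G J mu0 mu) X Y = clifford_jacobi X Y.
Proof.
move=> E_orthonormal; rewrite /jacobi_op -[RHS](orthonormal_expansion E_orthonormal).
by apply: eq_bigr => i _; rewrite clifford_tensor_gform gformC.
Qed.

Lemma clifford_mx_jacobi_coefC X Y :
  clifford_mx (jacobi_coef Y X) = - clifford_mx (jacobi_coef X Y).
Proof.
rewrite /clifford_mx -sumrN; apply: eq_bigr => i _.
by rewrite /jacobi_coef J_skew gformC // mulrN scaleNr.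
Qed.

Lemma clifford_jacobi_eigen_dual X Y l : clifford_jacobi X Y = l *: Y ->
  (mu0 * g X X - l) *: clifford_jacobi Y X =
  ((mu0 * g X X - l) * (mu0 * g Y Y) - (mu0 * g Y X) ^+ 2
   - 9 * \sum_i jacobi_coef X Y i ^+ 2) *: X.
Proof.
move=> eigen.
set c := mu0 * g X X - l; set a := mu0 * g Y X; set s := \sum_i _.
set B := clifford_mx (jacobi_coef X Y).
have dual : clifford_jacobi Y X = (mu0 * g Y Y) *: X - a *: Y - 3 *: (B *m Y).
  rewrite /clifford_jacobi [g X Y]gformC // -/a clifford_mx_jacobi_coefC.
  by rewrite mulNmx scalerN.
have cY : c *: Y = a *: X - 3 *: (B *m X).
  apply/matrixP => k j; move/matrixP/(_ k j): eigen; rewrite !mxE /c /a; lra.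
have cBY : c *: (B *m Y) = a *: (B *m X) + (3 * s) *: X.
  rewrite scalemxAr cY mulmxBr -!scalemxAr mulmxA clifford_mx_sqr mul_scalar_mx.
  by rewrite scalerA mulrN scaleNr opprK.
rewrite dual; move: (B *m X) (B *m Y) cY cBY => BX BY cY cBY.
apply/matrixP => k j; move/matrixP/(_ k j): cY; move/matrixP/(_ k j): cBY.
(* The a B X terms cancel after substituting c Y and c B Y. *)
rewrite !mxE => cBYk cYk; nra.
Qed.

Lemma clifford_jacobi_degenerate X Y :
  (mu0 * g Y X) ^+ 2 + 9 * \sum_i jacobi_coef X Y i ^+ 2 = 0 ->
  clifford_jacobi Y X = (mu0 * g Y Y) *: X.
Proof.
have coef_sqr_ge0 i : 0 <= jacobi_coef X Y i ^+ 2 by exact: sqr_ge0.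
move=> /eqP; rewrite paddr_eq0 ?sqr_ge0 ?mulr_ge0 ?sumr_ge0 //.
move=> /andP[]; rewrite sqrf_eq0 => /eqP a0; rewrite mulf_eq0 pnatr_eq0 /= => /eqP s0.
have B0 : clifford_mx (jacobi_coef X Y) = 0.
  apply: big1 => i _; have /eqP := psumr_eq0P (fun i _ => coef_sqr_ge0 i) s0 (i := i) isT.
  by rewrite sqrf_eq0 => /eqP ->; rewrite scale0r.
rewrite /clifford_jacobi clifford_mx_jacobi_coefC B0 [g X Y]gformC // a0.
by rewrite oppr0 mul0mx scaler0 scale0r subr0 addr0.
Qed.
End CliffordSystem.
End ScalarProduct.

Theorem mainTheorem5 (R : realType) (n m : nat) (G : 'M[R]_n)
  (J : 'I_m -> 'M[R]_n) (mu0 : R) (mu : 'I_m -> R) (E : 'I_n -> 'cV[R]_n) :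
  scalar_product G ->
  (forall i, skew_adjoint G (J i)) ->
  (forall i j : 'I_m,
     J i *m J j + J j *m J i = (if i == j then - (2%:M) else 0)) ->
  orthonormal_basis G E ->
  totally_jacobi_dual G E (clifford_tensor G J mu0 mu).
Proof.
move=> [G_sym _] J_skew J_clifford E_orthonormal X Y X_neq0 [Y_neq0 [l eigen]].
rewrite jacobi_op_clifford // in eigen; split => //; rewrite jacobi_op_clifford //.
have dual := clifford_jacobi_eigen_dual J_clifford G_sym J_skew eigen.
have [c0|c_neq0] := eqVneq (mu0 * gform G X X - l) 0.
- exists (mu0 * gform G Y Y); apply: clifford_jacobi_degenerate => //.
  move: dual; rewrite c0 scale0r mul0r sub0r -opprD => /esym/eqP.
  by rewrite scaler_eq0 (negbTE X_neq0) orbF oppr_eq0 => /eqP.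
- move: dual; set K := (k in _ = k *: _) => dual.
  exists (K / (mu0 * gform G X X - l)); apply: (scalerI c_neq0).
  by rewrite dual scalerA mulrC divfK.
Qed.
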